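(* Let $\mathbb{F}\in\{\mathbb{R},\mathbb{C}\}$ and $m\le n\le 2m$. For the $m\times n\times 2$ tensor $$X=\Big((E_m,O);\begin{pmatrix}O&E_{\lfloor n/2\rfloor}\\ O&O\end{pmatrix}\Big)$$ (the second slice being the $m\times n$ matrix with an identity block $E_{\lfloor n/2\rfloor}$ in its top-right corner and zeros elsewhere), one has $\mathrm{rank}_{\mathbb{F}}(X)=m+\lfloor n/2\rfloor$.
   Context: $E_k$ is the $k\times k$ identity, $(E_m,O)$ is the $m\times n$ matrix obtained by concatenating $E_m$ with a zero $m\times(n-m)$ block. $(A;B)$ denotes the tensor with slices $A,B$. A rank-one tensor has the form $(\alpha\,\mathbf{a}\mathbf{b}^T;\beta\,\mathbf{a}\mathbf{b}^T)$ with nonzero $\mathbf{a},\mathbf{b}$, $(\alpha,\beta)\ne0$; $\mathrm{rank}_{\mathbb{F}}$ is the minimal number of rank-one tensors over $\mathbb{F}$ summing slicewise to the tensor. *)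

From HB Require Import structures.
From mathcomp Require Import all_boot all_order all_algebra.
Set Implicit Arguments. Unset Strict Implicit. Unset Printing Implicit Defensive.
Import Order.TTheory GRing.Theory Num.Theory.
Local Open Scope ring_scope.

(* An m x n x 2 tensor (A;B) is represented by its two slices A B : 'M[F]_(m,n). *)

Definition rank_one (F : fieldType) (m n : nat) (A B : 'M[F]_(m, n)) : Prop :=
  exists (a : 'cV[F]_m) (b : 'cV[F]_n) (al be : F),
    [/\ a != 0, b != 0, (al, be) != (0, 0),
        A = al *: (a *m b^T) & B = be *: (a *m b^T)].

Definition sum_of_rank_one (F : fieldType) (m n r : nat) (A B : 'M[F]_(m, n)) : Prop :=
  exists (As Bs : 'I_r -> 'M[F]_(m, n)),
    [/\ forall i, rank_one (As i) (Bs i),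
        A = \sum_(i < r) As i & B = \sum_(i < r) Bs i].

Definition tensor_rank_is (F : fieldType) (m n : nat) (A B : 'M[F]_(m, n)) (r : nat) : Prop :=
  sum_of_rank_one r A B /\ forall r', sum_of_rank_one r' A B -> (r <= r')%N.

Definition slice1 (F : fieldType) (m n : nat) : 'M[F]_(m, n) :=
  \matrix_(i < m, j < n) (nat_of_ord i == nat_of_ord j)%:R.

(* Second slice: identity block E_{floor(n/2)} in the top-right corner
   (rows 0..n/2-1, columns n - n/2 .. n-1), zeros elsewhere. *)
Definition slice2 (F : fieldType) (m n : nat) : 'M[F]_(m, n) :=
  \matrix_(i < m, j < n) (nat_of_ord j == (nat_of_ord i + (n - n./2))%N)%:R.

From HB Require Import structures.
From mathcomp Require Import all_boot all_order all_algebra zify.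
Set Implicit Arguments. Unset Strict Implicit. Unset Printing Implicit Defensive.
Import Order.TTheory GRing.Theory Num.Theory.
Local Open Scope ring_scope.

(* The theorem is an instance of a general fact about 2-slice tensors over
   any field F: if (A;B) is an m x n x 2 tensor and some S : 'M_n satisfies
   A S = B and B S = 0, then rank_F(A;B) = rank A + rank B.
   - Upper bound: every matrix of rank s is a sum of s products a b^T with
     a, b nonzero (from col_base/row_base), so (A;0) and (0;B) together give
     rank A + rank B rank-one tensors.
   - Lower bound: a decomposition into r rank-one tensors factors as
     A = U D_al V^T, B = U D_be V^T with (al_t, be_t) <> 0.  With W = V^T S
     we get U D_be W = 0 and U D_al W = U D_be V^T.  Hence the rows of
     W^T D_be and W^T D_al - V D_be lie in the left kernel K of U^T; gluing
     them with the coordinate projection P onto {t | be_t = 0} yields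
     W^T D_d with d invertible, and rank (K P) + rank (K :&: ker P) = rank K
     gives rank W <= r - rank U; finally rank A <= rank U, rank B <= rank W.
   For the theorem, both slices are shift matrices [j = i + c], and the
   shift S by c = n - floor(n/2) satisfies A S = B, B S = 0 because
   2c >= n; the ranks of A and B are m and floor(n/2) when m <= n <= 2m. *)

Section TensorRank.
Variable F : fieldType.

Lemma mulmx_sum_outer m r n (A : 'M[F]_(m, r)) (B : 'M[F]_(r, n)) :
  A *m B = \sum_(t < r) col t A *m row t B.
Proof.
apply/matrixP => i j; rewrite !mxE summxE; apply: eq_bigr => t _.
by rewrite !mxE big_ord1 !mxE.
Qed.

Lemma delta_mx_neq0 m n (i : 'I_m) (j : 'I_n) : delta_mx i j != 0 :> 'M[F]_(m, n).
Proof. by apply/eqP => /matrixP/(_ i j)/eqP; rewrite !mxE !eqxx oner_eq0. Qed.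

Lemma row_free_row_neq0 m n (A : 'M[F]_(m, n)) (t : 'I_m) :
  row_free A -> row t A != 0.
Proof.
case/row_freeP => B AB.
apply: contraNneq (delta_mx_neq0 (ord0 : 'I_1) t) => At0; apply/eqP.
by rewrite -row1 -AB row_mul At0 mul0mx.
Qed.

Lemma row_full_col_neq0 m n (A : 'M[F]_(m, n)) (t : 'I_n) :
  row_full A -> col t A != 0.
Proof.
case/row_fullP => B BA.
apply: contraNneq (delta_mx_neq0 t (ord0 : 'I_1)) => At0; apply/eqP.
by rewrite -col1 -BA colE -mulmxA -colE At0 mulmx0.
Qed.

Lemma rank_one_decomposition m n (A : 'M[F]_(m, n)) :
  exists (a : 'I_(\rank A) -> 'cV[F]_m) (b : 'I_(\rank A) -> 'cV[F]_n),
    (forall t, a t != 0 /\ b t != 0) /\ A = \sum_t a t *m (b t)^T.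
Proof.
exists (fun t => col t (col_base A)), (fun t => (row t (row_base A))^T); split.
  move=> t; rewrite trmx_eq0 row_free_row_neq0 ?row_base_free //.
  by rewrite row_full_col_neq0 // col_base_full.
rewrite -{1}(mulmx_base A) mulmx_sum_outer.
by apply: eq_bigr => t _; rewrite trmxK.
Qed.

Lemma sum_of_rank_one_split m n p q
    (a : 'I_p -> 'cV[F]_m) (b : 'I_p -> 'cV[F]_n)
    (c : 'I_q -> 'cV[F]_m) (d : 'I_q -> 'cV[F]_n) :
  (forall s, a s != 0 /\ b s != 0) -> (forall s, c s != 0 /\ d s != 0) ->
  sum_of_rank_one (p + q) (\sum_s a s *m (b s)^T) (\sum_s c s *m (d s)^T).
Proof.
move=> nz_ab nz_cd.
pose u i := match split i with inl s => a s | inr s => c s end.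
pose v i := match split i with inl s => b s | inr s => d s end.
pose al (i : 'I_(p + q)) : F := if split i is inl _ then 1 else 0.
pose be (i : 'I_(p + q)) : F := if split i is inl _ then 0 else 1.
have split_l (s : 'I_p) : split (lshift q s) = inl s := unsplitK (inl s).
have split_r (s : 'I_q) : split (rshift p s) = inr s := unsplitK (inr s).
exists (fun i => al i *: (u i *m (v i)^T)), (fun i => be i *: (u i *m (v i)^T)).
split.
- move=> i; exists (u i), (v i), (al i), (be i); rewrite /u /v /al /be.
  case: (split i) => s; [case: (nz_ab s) | case: (nz_cd s)] => nz1 nz2;
    by split; rewrite // xpair_eqE oner_eq0 ?andbF.
- rewrite big_split_ord /= [X in _ + X]big1 => [|s _]; last first.
    by rewrite /al split_r scale0r.
  by rewrite addr0; apply: eq_bigr => s _; rewrite /al /u /v split_l scale1r.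
- rewrite big_split_ord /= [X in X + _]big1 => [|s _]; last first.
    by rewrite /be split_l scale0r.
  by rewrite add0r; apply: eq_bigr => s _; rewrite /be /u /v split_r scale1r.
Qed.

Lemma sum_of_rank_one_ranks m n (A B : 'M[F]_(m, n)) :
  sum_of_rank_one (\rank A + \rank B) A B.
Proof.
have [a [b [nz_ab defA]]] := rank_one_decomposition A.
have [c [d [nz_cd defB]]] := rank_one_decomposition B.
by have := sum_of_rank_one_split nz_ab nz_cd; rewrite -defA -defB.
Qed.

(* If X, Y lie in the row space of K and X P = 0, then X + Y P still has rank
   at most rank K, as rank (K :&: ker P) + rank (K P) = rank K. *)
Lemma rank_add_proj p q r (K : 'M[F]_(p, r)) (X Y : 'M[F]_(q, r)) (P : 'M[F]_r) :
  (X <= K)%MS -> (Y <= K)%MS -> X *m P = 0 -> (\rank (X + Y *m P)%R <= \rank K)%N.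
Proof.
move=> sXK sYK XP0; rewrite -(mxrank_mul_ker K P) addnC.
apply: leq_trans (mxrank_add _ _) _; apply: leq_add.
  by apply: mxrankS; rewrite sub_capmx sXK; apply/sub_kermxP.
exact/mxrankS/submxMr.
Qed.

Lemma pencil_rank_bound m n r (U : 'M[F]_(m, r)) (W Z : 'M[F]_(r, n))
    (al be : 'rV[F]_r) :
  (forall t, (al 0 t, be 0 t) != (0, 0)) ->
  U *m diag_mx be *m W = 0 -> U *m diag_mx al *m W = U *m diag_mx be *m Z ->
  (\rank U + \rank W <= r)%N.
Proof.
move=> nz_ab beW alW.
pose P := diag_mx (\row_t ((be 0 t == 0)%:R : F)).
pose d := \row_t (if be 0 t == 0 then al 0 t else be 0 t).
pose X := W^T *m diag_mx be.
pose Y := W^T *m diag_mx al - Z^T *m diag_mx be.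
have trU (G : 'M[F]_(r, n)) (g : 'rV[F]_r) :
    (U *m diag_mx g *m G)^T = G^T *m diag_mx g *m U^T.
  by rewrite !trmx_mul tr_diag_mx mulmxA.
have sXK : (X <= kermx U^T)%MS by apply/sub_kermxP; rewrite -trU beW trmx0.
have sYK : (Y <= kermx U^T)%MS.
  by apply/sub_kermxP; rewrite mulmxBl -!trU alW subrr.
have XP0 : X *m P = 0.
  apply/matrixP => i j; rewrite /X /P !mul_mx_diag !mxE.
  by case: eqP => [->|_]; rewrite ?mulr0 ?mul0r.
have XYP : X + Y *m P = W^T *m diag_mx d.
  apply/matrixP => i j; rewrite /X /Y /P /d mulmxBl !mul_mx_diag !mxE.
  by case: eqP => [->|_]; rewrite ?mulr0 ?mulr1 ?subr0 ?add0r ?addr0.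
have d_free : row_free (diag_mx d).
  rewrite row_free_unit unitmxE det_diag unitfE; apply/prodf_neq0 => t _.
  rewrite mxE; have := nz_ab t; rewrite xpair_eqE negb_and.
  by case: (eqVneq (be 0 t) 0) => [_|be_nz] /=; rewrite ?orbF.
(* rank W = rank (W^T D_d) <= rank (ker U^T) = r - rank U. *)
have := rank_add_proj sXK sYK XP0; rewrite XYP mxrankMfree //.
rewrite mxrank_tr mxrank_ker mxrank_tr; have := rank_leq_col U; lia.
Qed.

Lemma rank_one_factorization m n r (A B : 'M[F]_(m, n)) :
  sum_of_rank_one r A B ->
  exists (U : 'M[F]_(m, r)) (V : 'M[F]_(n, r)) (al be : 'rV[F]_r),
    [/\ forall t, (al 0 t, be 0 t) != (0, 0),
        A = U *m diag_mx al *m V^T & B = U *m diag_mx be *m V^T].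
Proof.
case=> As [Bs [rk1 -> ->]].
have /fin_all_exists [x xP] : forall t, exists x : 'cV[F]_m * 'cV[F]_n * (F * F),
    [/\ (x.2.1, x.2.2) != (0, 0), As t = x.2.1 *: (x.1.1 *m x.1.2^T)
       & Bs t = x.2.2 *: (x.1.1 *m x.1.2^T)].
  by move=> t; have [a [b [al [be [_ _ nz -> ->]]]]] := rk1 t; exists (a, b, (al, be)).
pose U : 'M[F]_(m, r) := \matrix_(i, t) (x t).1.1 i 0.
pose V : 'M[F]_(n, r) := \matrix_(j, t) (x t).1.2 j 0.
have outer (g : 'I_r -> F) :
    \sum_t g t *: ((x t).1.1 *m (x t).1.2^T) = U *m diag_mx (\row_t g t) *m V^T.
  apply/matrixP => i j; rewrite summxE mul_mx_diag !mxE.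
  by apply: eq_bigr => t _; rewrite !mxE big_ord1 !mxE mulrCA mulrA.
exists U, V, (\row_t (x t).2.1), (\row_t (x t).2.2); split.
- by move=> t; rewrite !mxE; case: (xP t).
- by rewrite -outer; apply: eq_bigr => t _; case: (xP t).
- by rewrite -outer; apply: eq_bigr => t _; case: (xP t).
Qed.

Lemma sum_of_rank_one_lower m n r (A B : 'M[F]_(m, n)) (S : 'M[F]_n) :
  A *m S = B -> B *m S = 0 -> sum_of_rank_one r A B -> (\rank A + \rank B <= r)%N.
Proof.
move=> AS_B BS_0 /rank_one_factorization [U [V [al [be [nz_ab defA defB]]]]].
have beW : U *m diag_mx be *m (V^T *m S) = 0 by rewrite mulmxA -defB.
have alW : U *m diag_mx al *m (V^T *m S) = B by rewrite mulmxA -defA.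
have := pencil_rank_bound nz_ab beW (etrans alW defB).
apply: leq_trans; apply: leq_add.
  by rewrite {1}defA -mulmxA mxrankM_maxl.
by rewrite -{1}alW mxrankM_maxr.
Qed.

Theorem tensor_rank_nilpotent_pencil m n (A B : 'M[F]_(m, n)) (S : 'M[F]_n) :
  A *m S = B -> B *m S = 0 -> tensor_rank_is A B (\rank A + \rank B).
Proof.
move=> AS_B BS_0; split; first exact: sum_of_rank_one_ranks.
by move=> r; apply: sum_of_rank_one_lower AS_B BS_0.
Qed.
End TensorRank.

Section Shift.
Variable F : fieldType.

Lemma sum_nat_delta n k (g : nat -> F) :
  \sum_(l < n) ((l : nat) == k)%:R * g l = (k < n)%:R * g k.
Proof.
case: (ltnP k n) => [kn | nk].
  rewrite (bigD1 (Ordinal kn)) //= eqxx mul1r big1 ?addr0 ?mul1r // => l nlk.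
  by have /negbTE -> : (l : nat) != k by []; rewrite mul0r.
rewrite mul0r big1 // => l _.
by rewrite (ltn_eqF (leq_trans (ltn_ord l) nk)) mul0r.
Qed.

Definition shift_mx m n c : 'M[F]_(m, n) :=
  \matrix_(i < m, j < n) ((j : nat) == (i + c)%N)%:R.

(* Shifts compose additively, provided every position j = i + c + d of the
   product passes through a middle index i + c < n. *)
Lemma mul_shift_mx m n p c d : (p <= d + n)%N ->
  shift_mx m n c *m shift_mx n p d = shift_mx m p (c + d).
Proof.
move=> pdn; apply/matrixP => i j; rewrite !mxE.
under eq_bigr => l _ do rewrite !mxE.
rewrite (sum_nat_delta n (i + c)%N (fun l => ((j : nat) == (l + d)%N)%:R)) addnA.
case: ltnP => icn; rewrite ?mul1r // mul0r.
have /ltn_eqF -> // : (j < i + c + d)%N.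
by have := ltn_ord j; lia.
Qed.

Lemma shift_mx_eq0 m n c : (n <= c)%N -> shift_mx m n c = 0.
Proof.
move=> nc; apply/matrixP => i j; rewrite !mxE.
by have /ltn_eqF -> : (j < i + c)%N by have := ltn_ord j; lia.
Qed.

Lemma shift_mx_mul_tr m n c :
  shift_mx m n c *m (shift_mx m n c)^T = pid_mx (n - c).
Proof.
apply/matrixP => i j; rewrite !mxE; under eq_bigr => l _ do rewrite !mxE.
rewrite (sum_nat_delta n (i + c)%N (fun l => (l == (j + c)%N)%:R)).
have -> : (i + c < n)%N = (i < n - c)%N by lia.
by rewrite eqn_add2r andbC; case: (i < n - c)%N; rewrite ?mul1r ?mul0r.
Qed.

(* ... and P M = M, since the rows of M beyond n - c vanish. *)
Lemma pid_mul_shift_mx m n c : pid_mx (n - c) *m shift_mx m n c = shift_mx m n c.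
Proof.
apply/matrixP => i j; rewrite !mxE; case: (ltnP i (n - c)) => icn.
  under eq_bigr => l _ do rewrite !mxE icn andbT eq_sym.
  by rewrite (sum_nat_delta m i (fun l => ((j : nat) == (l + c)%N)%:R)) ltn_ord mul1r.
rewrite big1 => [|l _]; last by rewrite !mxE ltnNge icn andbF mul0r.
by have /ltn_eqF -> : (j < i + c)%N by have := ltn_ord j; lia.
Qed.

(* Hence rank M <= rank P <= rank M, and rank P = minn m (n - c). *)
Lemma rank_shift_mx m n c : \rank (shift_mx m n c) = minn m (n - c).
Proof.
have rank_pid : \rank (pid_mx (n - c) : 'M[F]_m) = minn m (n - c).
  by rewrite -pid_mx_minh rank_pid_mx ?geq_minl.
apply/eqP; rewrite eqn_leq; apply/andP; split.
  by rewrite -rank_pid -{1}pid_mul_shift_mx mxrankM_maxl.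
by rewrite -rank_pid -shift_mx_mul_tr mxrankM_maxl.
Qed.
End Shift.

Lemma slice1_shift (F : fieldType) m n : slice1 F m n = shift_mx F m n 0.
Proof. by apply/matrixP => i j; rewrite !mxE addn0 eq_sym. Qed.

Lemma slices_tensor_rank (F : fieldType) m n : (m <= n)%N -> (n <= 2 * m)%N ->
  tensor_rank_is (slice1 F m n) (slice2 F m n) (m + n./2)%N.
Proof.
move=> le_mn le_n2m; set c := (n - n./2)%N.
have AS_B : slice1 F m n *m shift_mx F n n c = slice2 F m n.
  by rewrite slice1_shift mul_shift_mx ?leq_addl.
have BS_0 : slice2 F m n *m shift_mx F n n c = 0.
  by rewrite mul_shift_mx ?leq_addl // shift_mx_eq0 //; lia.
have rank1 : \rank (slice1 F m n) = m by rewrite slice1_shift rank_shift_mx; lia.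
have rank2 : \rank (slice2 F m n) = n./2 by rewrite rank_shift_mx; lia.
by have := tensor_rank_nilpotent_pencil AS_B BS_0; rewrite rank1 rank2.
Qed.

Theorem mainTheorem8 :
  (forall (R : rcfType) (m n : nat), (m <= n)%N -> (n <= 2 * m)%N ->
     tensor_rank_is (slice1 R m n) (slice2 R m n) (m + n./2)%N)
  /\
  (forall (C : numClosedFieldType) (m n : nat), (m <= n)%N -> (n <= 2 * m)%N ->
     tensor_rank_is (slice1 C m n) (slice2 C m n) (m + n./2)%N).
Proof. by split=> F m n; apply: slices_tensor_rank. Qed.
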